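(* Let $M$ be a right $R$-module with $S=\mathrm{End}_R(M)$, and consider: (i) $S$ is a right coherent ring and $M$ is flat as a left $S$-module; (ii) $M$ is $M$-coherent. Then (i)$\Rightarrow$(ii). If moreover $M$ is intrinsically projective, then (i) and (ii) are equivalent.
   Context: $M$ is regarded as a left $S$-module via evaluation. $M^{(n)}$ denotes the direct sum of $n$ copies of $M$. A module $N$ is finitely $M$-generated if there is an epimorphism $M^{(n)}\to N$ for some $n>0$. A finitely $M$-generated module $N$ is $M$-coherent if for every $n>0$ and every homomorphism $\rho:M^{(n)}\to N$, $\ker\rho$ is finitely $M$-generated. A ring $S$ is right coherent if every finitely generated right ideal is finitely presented. $M$ is intrinsically projective if for every integer $n>0$, every submodule $N\le M$, every epimorphism $\alpha:M^{(n)}\to N$ and every homomorphism $\beta:M\to N$, there exists $\gamma:M\to M^{(n)}$ with $\alpha\gamma=\beta$. *)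

From HB Require Import structures.
From mathcomp Require Import all_boot all_order all_algebra.
Set Implicit Arguments. Unset Strict Implicit. Unset Printing Implicit Defensive.
Import GRing.Theory.
Local Open Scope ring_scope.

(* A right R-module M is modelled as a left module over the converse ring R^c:
   m.r := r *: m.  Elements of S = End_R(M) are functions M -> M that are
   R-linear; multiplication in S is composition (s t = s \o t), so M is a
   left S-module via evaluation. *)

Section Defs.
Variables (R : nzRingType) (M : lmodType R^c).

Definition rlinear (U V : lmodType R^c) (f : U -> V) : Prop :=
  forall (r : R^c) (x y : U), f (r *: x + y) = r *: f x + f y.

Notation Mn n := {ffun 'I_n -> M}.

Definition isEnd (s : M -> M) : Prop := rlinear s.

Definition submodule (V : lmodType R^c) (P : V -> Prop) : Prop :=
  P 0 /\ forall (r : R^c) x y, P x -> P y -> P (r *: x + y).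

Definition fin_M_gen (V : lmodType R^c) (P : V -> Prop) : Prop :=
  exists m : nat, (0 < m)%N /\ exists phi : Mn m -> V,
    rlinear phi /\ forall y, P y <-> exists z, phi z = y.

Definition M_coherent (V : lmodType R^c) (P : V -> Prop) : Prop :=
  fin_M_gen P /\
  forall (n : nat) (rho : Mn n -> V), (0 < n)%N -> rlinear rho ->
    (forall z, P (rho z)) -> fin_M_gen (fun y : Mn n => rho y = 0).

Definition intrinsically_projective : Prop :=
  forall (n : nat) (N : M -> Prop) (alpha : Mn n -> M) (beta : M -> M),
    (0 < n)%N -> submodule N ->
    rlinear alpha -> (forall y, N y <-> exists z, alpha z = y) ->
    rlinear beta -> (forall x, N (beta x)) ->
    exists gamma : M -> Mn n, rlinear gamma /\ forall x, alpha (gamma x) = beta x.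

Definition right_ideal_gen (k : nat) (g : 'I_k -> M -> M) (s : M -> M) : Prop :=
  exists t : 'I_k -> M -> M, (forall j, isEnd (t j)) /\
    forall x, s x = \sum_(j < k) g j (t j x).

(* the right ideal I (as a right S-module) is finitely presented: there is an
   exact sequence S^m -> S^k -> I -> 0 *)
Definition fin_presented_right_ideal (I : (M -> M) -> Prop) : Prop :=
  exists (k : nat) (g : 'I_k -> M -> M),
    (forall j, isEnd (g j)) /\
    (forall s, I s <-> right_ideal_gen g s) /\
    exists (m : nat) (v : 'I_m -> 'I_k -> M -> M),
      (forall l j, isEnd (v l j)) /\
      forall t : 'I_k -> M -> M, (forall j, isEnd (t j)) ->
        ((forall x, \sum_(j < k) g j (t j x) = 0) <->
         exists u : 'I_m -> M -> M, (forall l, isEnd (u l)) /\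
           forall j x, t j x = \sum_(l < m) v l j (u l x)).

Definition S_right_coherent : Prop :=
  forall (k : nat) (g : 'I_k -> M -> M), (forall j, isEnd (g j)) ->
    fin_presented_right_ideal (right_ideal_gen g).

Definition right_S_action (A : zmodType) (act : A -> (M -> M) -> A) : Prop :=
  (forall a b s, isEnd s -> act (a + b) s = act a s + act b s) /\
  (forall a s t, isEnd s -> isEnd t -> act a (fun x => s x + t x) = act a s + act a t) /\
  (forall a s t, isEnd s -> isEnd t -> act a (s \o t) = act (act a s) t) /\
  (forall a, act a id = a).

Definition S_balanced (A : zmodType) (act : A -> (M -> M) -> A)
    (G : zmodType) (beta : A -> M -> G) : Prop :=
  (forall a b x, beta (a + b) x = beta a x + beta b x) /\
  (forall a x y, beta a (x + y) = beta a x + beta a y) /\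
  (forall a s x, isEnd s -> beta (act a s) x = beta a (s x)).

(* \sum_k a_k (x) x_k = 0 in A (x)_S M, characterized by the universal
   property of the tensor product *)
Definition tensor_zero (A : zmodType) (act : A -> (M -> M) -> A)
    (n : nat) (a : 'I_n -> A) (x : 'I_n -> M) : Prop :=
  forall (G : zmodType) (beta : A -> M -> G), S_balanced act beta ->
    \sum_(k < n) beta (a k) (x k) = 0.

(* M is flat as a left S-module: - (x)_S M preserves monomorphisms *)
Definition flat_left_S : Prop :=
  forall (A : zmodType) (actA : A -> (M -> M) -> A)
         (B : zmodType) (actB : B -> (M -> M) -> B) (f : A -> B),
    right_S_action actA -> right_S_action actB ->
    (forall a b, f (a + b) = f a + f b) ->
    (forall a s, isEnd s -> f (actA a s) = actB (f a) s) ->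
    injective f ->
    forall (n : nat) (a : 'I_n -> A) (x : 'I_n -> M),
      tensor_zero actB (fun k => f (a k)) x -> tensor_zero actA a x.

End Defs.

(* A map M^(n) -> M is z |-> \sum_j g_j z_j for endomorphisms g_j in S
   ([comb]), so (ii) says that the relations among finitely many elements
   of S are finitely M-generated ([kernels_fin_M_gen], [M_coherentP]).
   - (ii) + intrinsic projectivity ==> S right coherent: a map M -> M^(k)
     landing in the image of a map M^(m) -> M^(k) factors through it
     ([factor_through], by induction on k, using the kernel of one
     coordinate); applied to a generating map of ker (comb g), it shows that
     the relations of g are generated by finitely many ones.
   - (ii) ==> M flat: for a right S-module B, B (x)_S M is realised as lists
     of pairs (b, x) modulo trivial sums \sum_k b_k (x) x_k, those with
     x_k = \sum_l s_kl y_l and \sum_k b_k s_kl = 0 ([trivial_sum]).  Under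
     (ii) trivial sums are closed under cancellation ([trivial_cancel]), so
     every sum vanishing in the tensor product is trivial
     ([trivial_of_tensor_zero]); and trivial sums pull back along injective
     S-maps ([trivial_pullback]).
   - (i) ==> (ii): right coherence presents the right ideal I generated by
     the g_j, with generators g'_i and relations v_l.  If comb g y = 0 then
     \sum_j g_j (x) y_j vanishes in S (x)_S M, hence by flatness in
     I (x)_S M; testing against the balanced map I x M -> M^(k)/(relations)
     shows that y lies in the image of an explicit map M^(n+m) -> M^(n)
     ([kernel_map], [kernels_of_flat]). *)
From HB Require Import structures.
From mathcomp Require Import all_boot all_order all_algebra zify.
From mathcomp Require Import ring_quotient generic_quotient boolp.
Set Implicit Arguments. Unset Strict Implicit. Unset Printing Implicit Defensive.
Import GRing.Theory.
Local Open Scope ring_scope.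

Section CongruenceQuotient.
Variables (T : Type) (zero : T) (opp : T -> T) (add : T -> T -> T).
Variable eqv : T -> T -> Prop.
Hypotheses (eqv_refl : forall x, eqv x x)
  (eqv_sym : forall x y, eqv x y -> eqv y x)
  (eqv_trans : forall x y z, eqv x y -> eqv y z -> eqv x z).
Hypotheses (add_congr : forall x x' y y', eqv x x' -> eqv y y' -> eqv (add x y) (add x' y'))
  (opp_congr : forall x x', eqv x x' -> eqv (opp x) (opp x')).
Hypotheses (addA : forall x y z, eqv (add x (add y z)) (add (add x y) z))
  (addC : forall x y, eqv (add x y) (add y x))
  (add0 : forall x, eqv (add zero x) x)
  (addN : forall x, eqv (add (opp x) x) zero).

Record eqv_class := EqvClass { members : T -> Prop; membersP : exists t, members = eqv t }.

Definition class_of (t : T) : eqv_class := @EqvClass (eqv t) (ex_intro _ t erefl).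

Lemma eqv_class_ext (p q : eqv_class) : members p = members q -> p = q.
Proof.
by case: p q => [P HP] [Q HQ] /= E; subst Q; congr EqvClass; apply: Prop_irrelevance.
Qed.

Lemma class_of_eq t u : eqv t u -> class_of t = class_of u.
Proof.
move=> Etu; apply: eqv_class_ext; apply: funext => v; apply: propext.
by split; [apply: eqv_trans; apply: eqv_sym | apply: eqv_trans].
Qed.

Lemma class_of_inj t u : class_of t = class_of u -> eqv t u.
Proof. by move=> /(congr1 members) /= ->. Qed.

Definition class_repr (q : eqv_class) : T := projT1 (cid (membersP q)).

Lemma class_reprK q : class_of (class_repr q) = q.
Proof. by apply: eqv_class_ext; rewrite /class_repr; case: cid => t /= ->. Qed.

Lemma class_repr_eqv t : eqv (class_repr (class_of t)) t.
Proof. by apply: class_of_inj; rewrite class_reprK. Qed.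

Definition class_add p q := class_of (add (class_repr p) (class_repr q)).
Definition class_opp p := class_of (opp (class_repr p)).

Lemma class_addE t u : class_add (class_of t) (class_of u) = class_of (add t u).
Proof. by apply: class_of_eq; apply: add_congr; apply: class_repr_eqv. Qed.

Lemma class_oppE t : class_opp (class_of t) = class_of (opp t).
Proof. by apply: class_of_eq; apply: opp_congr; apply: class_repr_eqv. Qed.

Lemma class_addA : associative class_add.
Proof.
move=> p q r; rewrite -(class_reprK p) -(class_reprK q) -(class_reprK r).
by rewrite !class_addE; apply: class_of_eq.
Qed.

Lemma class_addC : commutative class_add.
Proof.
by move=> p q; rewrite -(class_reprK p) -(class_reprK q) !class_addE; apply: class_of_eq.
Qed.

Lemma class_add0 : left_id (class_of zero) class_add.
Proof. by move=> p; rewrite -(class_reprK p) class_addE; apply: class_of_eq. Qed.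

Lemma class_addN : left_inverse (class_of zero) class_opp class_add.
Proof. by move=> p; rewrite -(class_reprK p) class_oppE class_addE; apply: class_of_eq. Qed.

HB.instance Definition _ := gen_eqMixin eqv_class.
HB.instance Definition _ := gen_choiceMixin eqv_class.
HB.instance Definition _ :=
  GRing.isZmodule.Build eqv_class class_addA class_addC class_add0 class_addN.

Definition eqv_quotient : zmodType := eqv_class.
Definition to_eqv_quotient (t : T) : eqv_quotient := class_of t.

Lemma to_eqv_quotientD t u :
  to_eqv_quotient (add t u) = to_eqv_quotient t + to_eqv_quotient u.
Proof. by rewrite /to_eqv_quotient -class_addE. Qed.

Lemma to_eqv_quotient0 : to_eqv_quotient zero = 0.
Proof. by []. Qed.

Lemma to_eqv_quotient_eq t u : eqv t u -> to_eqv_quotient t = to_eqv_quotient u.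
Proof. exact: class_of_eq. Qed.

Lemma to_eqv_quotient_inj t u : to_eqv_quotient t = to_eqv_quotient u -> eqv t u.
Proof. exact: class_of_inj. Qed.
End CongruenceQuotient.

Section SubgroupQuotient.
Local Open Scope quotient_scope.
Variables (V : zmodType) (W : V -> Prop).
Hypotheses (W0 : W 0) (WB : forall x y, W x -> W y -> W (x - y)).

Definition subgroup_pred : {pred V} := fun v => `[< W v >].

Fact subgroup_pred_zmod_closed : zmod_closed subgroup_pred.
Proof. by split=> [|x y /asboolP Wx /asboolP Wy]; apply/asboolP; [|exact: WB]. Qed.

HB.instance Definition _ :=
  GRing.isZmodClosed.Build V subgroup_pred subgroup_pred_zmod_closed.

Definition subgroup_quot : zmodType := Quotient.quot subgroup_pred.
Definition to_quot : V -> subgroup_quot := \pi.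

Lemma to_quot_sum I (r : seq I) (F : I -> V) :
  to_quot (\sum_(i <- r) F i) = \sum_(i <- r) to_quot (F i).
Proof. exact: raddf_sum. Qed.

Lemma to_quotD u v : to_quot (u + v) = to_quot u + to_quot v.
Proof. exact: raddfD. Qed.

Lemma to_quot_eq u v : W (u - v) -> to_quot u = to_quot v.
Proof. by move=> Wuv; apply/eqP; rewrite -Quotient.idealrBE; apply/asboolP. Qed.

Lemma to_quot_eq0 u : to_quot u = 0 -> W u.
Proof.
move=> u0; suff: u - 0 \in subgroup_pred by rewrite subr0 => /asboolP.
by rewrite Quotient.idealrBE; apply/eqP; rewrite -[LHS]/(to_quot u) u0 raddf0.
Qed.
End SubgroupQuotient.

Section RLinear.
Variable R : nzRingType.
Implicit Types U V W : lmodType R^c.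

Section OneMap.
Variables (V W : lmodType R^c) (f : V -> W).
Hypothesis f_lin : rlinear f.

Lemma rlinD x y : f (x + y) = f x + f y.
Proof. by rewrite -[x in LHS]scale1r f_lin scale1r. Qed.

Lemma rlin0 : f 0 = 0.
Proof. by apply: (addIr (f 0)); rewrite -rlinD !add0r. Qed.

Lemma rlinN x : f (- x) = - f x.
Proof. by apply/eqP; rewrite -addr_eq0 -rlinD addNr rlin0. Qed.

Lemma rlinB x y : f (x - y) = f x - f y.
Proof. by rewrite rlinD rlinN. Qed.

Lemma rlin_sum I (s : seq I) (P : pred I) (F : I -> V) :
  f (\sum_(i <- s | P i) F i) = \sum_(i <- s | P i) f (F i).
Proof. exact: (big_morph f rlinD rlin0). Qed.
End OneMap.

Lemma rlin_id V : rlinear (@id V).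
Proof. by []. Qed.

Lemma rlin_comp U V W (f : V -> W) (g : U -> V) :
  rlinear f -> rlinear g -> rlinear (fun x => f (g x)).
Proof. by move=> Hf Hg r x y; rewrite Hg Hf. Qed.

Lemma rlin_zero V W : rlinear (fun _ : V => (0 : W)).
Proof. by move=> r x y; rewrite scaler0 addr0. Qed.

Lemma rlin_add V W (f g : V -> W) :
  rlinear f -> rlinear g -> rlinear (fun x => f x + g x).
Proof. by move=> Hf Hg r x y; rewrite Hf Hg scalerDr addrACA. Qed.

Lemma rlin_opp V W (f : V -> W) : rlinear f -> rlinear (fun x => - f x).
Proof. by move=> Hf r x y; rewrite Hf opprD scalerN. Qed.

Lemma rlin_sub V W (f g : V -> W) :
  rlinear f -> rlinear g -> rlinear (fun x => f x - g x).
Proof. by move=> Hf Hg; apply: rlin_add => //; apply: rlin_opp. Qed.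

Lemma rlin_sumf V W I (s : seq I) (F : I -> V -> W) :
  (forall i, rlinear (F i)) -> rlinear (fun x => \sum_(i <- s) F i x).
Proof.
move=> HF r x y; elim: s => [|i s IH]; first by rewrite !big_nil scaler0 addr0.
by rewrite !big_cons HF IH scalerDr addrACA.
Qed.

Lemma rlin_ffun V W n (F : 'I_n -> V -> W) :
  (forall i, rlinear (F i)) -> rlinear (fun x => [ffun i => F i x]).
Proof. by move=> HF r x y; apply/ffunP => i; rewrite !ffunE HF. Qed.

Lemma rlin_coord W n (i : 'I_n) : rlinear (fun z : {ffun 'I_n -> W} => z i).
Proof. by move=> r x y; rewrite !ffunE. Qed.

Lemma rlin_app V W n (phi : V -> {ffun 'I_n -> W}) i :
  rlinear phi -> rlinear (fun z => phi z i).
Proof. by move=> H r x y; rewrite H !ffunE. Qed.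
End RLinear.

Section Summands.
Variables (R : nzRingType) (M : lmodType R^c).
Local Notation Mn n := {ffun 'I_n -> M}.

Definition inj_at n (j : 'I_n) (x : M) : Mn n := [ffun i => if i == j then x else 0].

Lemma rlin_inj_at n (j : 'I_n) : rlinear (inj_at j).
Proof. by move=> r x y; apply/ffunP => i; rewrite !ffunE; case: eqP; rewrite ?scaler0 ?addr0. Qed.

Lemma sum_inj_at n (z : Mn n) : \sum_j inj_at j (z j) = z.
Proof.
apply/ffunP => i; rewrite sum_ffunE (bigD1 i) //= ffunE eqxx big1 ?addr0 //.
by move=> j /negPf ji; rewrite ffunE eq_sym ji.
Qed.

Lemma rlin_decompose (W : lmodType R^c) n (phi : Mn n -> W) (z : Mn n) :
  rlinear phi -> phi z = \sum_j phi (inj_at j (z j)).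
Proof. by move=> Hphi; rewrite -{1}(sum_inj_at z) (rlin_sum Hphi). Qed.

Lemma rlin_decompose_coord m n (phi : Mn m -> Mn n) (z : Mn m) i :
  rlinear phi -> phi z i = \sum_j phi (inj_at j (z j)) i.
Proof. by move=> Hphi; rewrite (rlin_decompose z Hphi) sum_ffunE. Qed.

Definition comb p (h : 'I_p -> M -> M) (y : Mn p) : M := \sum_j h j (y j).

Definition mx_map p q (F : 'I_p -> 'I_q -> M -> M) (u : Mn p) : Mn q :=
  [ffun j => \sum_i F i j (u i)].

Lemma rlin_comb p (h : 'I_p -> M -> M) : (forall j, isEnd (h j)) -> rlinear (comb h).
Proof. by move=> Hh; apply: rlin_sumf => j; exact: rlin_comp (Hh j) (rlin_coord j). Qed.

Lemma rlin_mx_map p q (F : 'I_p -> 'I_q -> M -> M) :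
  (forall i j, isEnd (F i j)) -> rlinear (mx_map F).
Proof.
move=> HF; apply: rlin_ffun => j; apply: rlin_sumf => i.
exact: rlin_comp (HF i j) (rlin_coord i).
Qed.

Lemma comb_mx_map p q (h : 'I_q -> M -> M) (F : 'I_p -> 'I_q -> M -> M) u :
  (forall j, isEnd (h j)) ->
  comb h (mx_map F u) = \sum_i \sum_j h j (F i j (u i)).
Proof.
move=> Hh; rewrite /comb exchange_big; apply: eq_bigr => j _.
by rewrite ffunE (rlin_sum (Hh j)).
Qed.

Lemma Mn0_eq (z z' : Mn 0) : z = z'.
Proof. by apply/ffunP => -[]. Qed.
End Summands.

Section Coherence.
Variables (R : nzRingType) (M : lmodType R^c).
Local Notation Mn n := {ffun 'I_n -> M}.

(* The content of the M-coherence of M: kernels of maps M^(n) -> M are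
   finitely M-generated (M itself is trivially finitely M-generated). *)
Definition kernels_fin_M_gen : Prop :=
  forall n (rho : Mn n -> M), (0 < n)%N -> rlinear rho ->
    fin_M_gen M (fun y : Mn n => rho y = 0).

Lemma M_coherentP : M_coherent M (fun _ : M => True) <-> kernels_fin_M_gen.
Proof.
split=> [[_ ker_fg] n rho n_gt0 Hrho | ker_fg]; first exact: ker_fg.
split=> [|n rho n_gt0 Hrho _]; last exact: ker_fg.
exists 1%N; split => //; exists (fun z : Mn 1 => z ord0); split; first exact: rlin_coord.
by move=> y; split => // _; exists [ffun => y]; rewrite ffunE.
Qed.
End Coherence.

Section RightCoherence.
Variables (R : nzRingType) (M : lmodType R^c).
Local Notation Mn n := {ffun 'I_n -> M}.
Hypothesis ker_fg : kernels_fin_M_gen M.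
Hypothesis M_ip : intrinsically_projective M.

Lemma factor_through_one m (alpha : Mn m -> M) (beta : M -> M) :
  (0 < m)%N -> rlinear alpha -> rlinear beta ->
  (forall x, exists z, alpha z = beta x) ->
  exists gamma : M -> Mn m, rlinear gamma /\ forall x, alpha (gamma x) = beta x.
Proof.
move=> m_gt0 Halpha Hbeta im_beta.
apply: (M_ip (N := fun y => exists z, alpha z = y)) => //.
split; first by exists 0; rewrite (rlin0 Halpha).
by move=> r _ _ [zx <-] [zy <-]; exists (r *: zx + zy); rewrite Halpha.
Qed.

(* The same for maps into M^(k): factor the last coordinate, then correct the
   remaining ones by a map into the kernel of that coordinate, which is
   finitely M-generated. *)
Lemma factor_through k : forall m (phi : Mn m -> Mn k) (T : M -> Mn k),
  rlinear phi -> rlinear T -> (forall x, exists z, phi z = T x) ->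
  exists u : M -> Mn m, rlinear u /\ forall x, phi (u x) = T x.
Proof.
elim: k => [|k IH] m phi T Hphi HT im_T.
  by exists (fun _ => 0); split; [exact: rlin_zero | move=> x; apply: Mn0_eq].
case: m phi Hphi im_T => [|m] phi Hphi im_T.
  exists (fun _ => 0); split; first exact: rlin_zero.
  by move=> x; have [z <-] := im_T x; congr phi; apply: Mn0_eq.
pose alpha z := phi z ord_max.
have Halpha : rlinear alpha by apply: rlin_app.
have [gamma [Hgamma alpha_gamma]] : exists gamma : M -> Mn m.+1,
    rlinear gamma /\ forall x, alpha (gamma x) = T x ord_max.
  apply: factor_through_one => //; first exact: rlin_app.
  by move=> x; have [z Hz] := im_T x; exists z; rewrite /alpha Hz.
have [m' [_ [psi [Hpsi ker_alpha]]]] := ker_fg (ltn0Sn m) Halpha.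
pose phi' (z : Mn m') : Mn k := [ffun i => phi (psi z) (lift ord_max i)].
pose T' (x : M) : Mn k := [ffun i => T x (lift ord_max i) - phi (gamma x) (lift ord_max i)].
have [u [Hu phi'_u]] : exists u : M -> Mn m', rlinear u /\ forall x, phi' (u x) = T' x.
  apply: IH.
  - apply: rlin_ffun => i; apply: (rlin_app (phi := fun z => phi (psi z))).
    exact: rlin_comp.
  - apply: rlin_ffun => i; apply: rlin_sub; first exact: rlin_app.
    by apply: (rlin_app (phi := fun x => phi (gamma x))); apply: rlin_comp.
  - move=> x; have [z Hz] := im_T x.
    have : alpha (z - gamma x) = 0 by rewrite (rlinB Halpha) alpha_gamma /alpha Hz subrr.
    move=> /ker_alpha [z' Hz']; exists z'; apply/ffunP => i.
    by rewrite !ffunE Hz' (rlinB Hphi) !ffunE Hz.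
exists (fun x => gamma x + psi (u x)); split.
  by apply: rlin_add => //; apply: rlin_comp.
move=> x; apply/ffunP => i; rewrite (rlinD Hphi) ffunE.
case: (unliftP ord_max i) => [j ->|->].
  by have := congr1 (fun v : Mn k => v j) (phi'_u x); rewrite !ffunE => ->; rewrite addrC subrK.
have -> : phi (psi (u x)) ord_max = 0 by apply/ker_alpha; exists (u x).
by rewrite addr0; exact: alpha_gamma.
Qed.

(* The relations among g_1, ..., g_k in S are given by the coordinates of a
   generating map psi : M^(m) -> M^(k) of ker (comb g): a relation t, viewed
   as a map M -> ker (comb g), factors through psi by [factor_through]. *)
Lemma S_right_coherent_of_kernels : S_right_coherent M.
Proof.
move=> k g Hg; exists k, g; split => //; split => //.
case: k g Hg => [|k] g Hg.
  exists 0%N, (fun _ _ => id); split; first by case.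
  move=> t Ht; split; first by move=> _; exists (fun _ => id); split => //; case.
  by move=> _ x; rewrite big_ord0.
have [m [_ [psi [Hpsi ker_g]]]] := ker_fg (ltn0Sn k) (rlin_comb Hg).
exists m, (fun l j x => psi (inj_at l x) j); split.
  move=> l j; apply: (rlin_app j (phi := fun x => psi (inj_at l x))).
  exact: (rlin_comp Hpsi (rlin_inj_at l)).
move=> t Ht; split=> [t_rel | [u [Hu t_u]] x].
  pose T x := [ffun j => t j x].
  have [u [Hu psi_u]] : exists u : M -> Mn m, rlinear u /\ forall x, psi (u x) = T x.
    apply: factor_through => //; first exact: rlin_ffun.
    move=> x; apply/ker_g; rewrite /comb /T.
    by under eq_bigr do rewrite ffunE; exact: t_rel.
  exists (fun l x => u x l); split; first by move=> l; apply: (rlin_app l (phi := u)).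
  by move=> j x; rewrite -(rlin_decompose_coord _ _ Hpsi) psi_u ffunE.
have psi_u : psi [ffun l => u l x] = [ffun j => t j x].
  apply/ffunP => j; rewrite (rlin_decompose_coord _ _ Hpsi) ffunE t_u.
  by apply: eq_bigr => l _; rewrite ffunE.
have : comb g (psi [ffun l => u l x]) = 0 by apply/ker_g; eexists.
by rewrite psi_u /comb; under eq_bigr do rewrite ffunE.
Qed.
End RightCoherence.

Section RightAction.
Variables (R : nzRingType) (M : lmodType R^c).
Variables (B : zmodType) (act : B -> (M -> M) -> B).
Hypothesis act_right : right_S_action act.

Lemma actDl a b s : isEnd s -> act (a + b) s = act a s + act b s.
Proof. by case: act_right => H _; apply: H. Qed.

Lemma actDr a s t : isEnd s -> isEnd t -> act a (fun x => s x + t x) = act a s + act a t.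
Proof. by case: act_right => _ [H _]; apply: H. Qed.

Lemma actM a s t : isEnd s -> isEnd t -> act a (fun x => s (t x)) = act (act a s) t.
Proof. by case: act_right => _ [_ [H _]]; apply: H. Qed.

Lemma act1 a : act a id = a.
Proof. by case: act_right => _ [_ [_ H]]; apply: H. Qed.

Lemma act0l s : isEnd s -> act 0 s = 0.
Proof. by move=> Hs; apply: (addIr (act 0 s)); rewrite -actDl // !add0r. Qed.

Lemma actNl a s : isEnd s -> act (- a) s = - act a s.
Proof. by move=> Hs; apply/eqP; rewrite -addr_eq0 -actDl // addNr act0l. Qed.

Lemma act_suml I (r : seq I) (F : I -> B) s : isEnd s ->
  act (\sum_(i <- r) F i) s = \sum_(i <- r) act (F i) s.
Proof. by move=> Hs; apply: (big_morph (act^~ s)) => [a b|]; [exact: actDl | exact: act0l]. Qed.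

Lemma act0r a : act a (fun _ => 0) = 0.
Proof.
have E0 : isEnd (fun _ : M => 0 : M) := @rlin_zero _ M M.
apply: (addIr (act a (fun _ => 0))); rewrite add0r -actDr //.
by congr act; apply: funext => x; rewrite addr0.
Qed.

Lemma actNr a s : isEnd s -> act a (fun x => - s x) = - act a s.
Proof.
move=> Hs; apply/eqP; rewrite -addr_eq0 -actDr //; last exact: rlin_opp.
apply/eqP; rewrite -[RHS](act0r a); congr act.
by apply: funext => x; rewrite addNr.
Qed.

Lemma act_sumr a I (r : seq I) (F : I -> M -> M) : (forall i, isEnd (F i)) ->
  act a (fun x => \sum_(i <- r) F i x) = \sum_(i <- r) act a (F i).
Proof.
move=> HF; elim: r => [|i r IH].
  by rewrite big_nil -(act0r a); congr act; apply: funext => x; rewrite big_nil.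
rewrite big_cons -IH -actDr //; last exact: rlin_sumf.
by congr act; apply: funext => x; rewrite big_cons.
Qed.

Lemma act_sum_rows m (w : seq (B * M * ('I_m -> M -> M))) (t : 'I_m -> M -> M) :
  (forall e, e \in w -> forall l, isEnd (e.2 l)) -> (forall l, isEnd (t l)) ->
  \sum_(e <- w) act e.1.1 (fun v => \sum_l e.2 l (t l v)) =
  \sum_l act (\sum_(e <- w) act e.1.1 (e.2 l)) (t l).
Proof.
move=> Hw Ht; rewrite (eq_big_seq (fun e => \sum_l act (act e.1.1 (e.2 l)) (t l))).
  by rewrite exchange_big; apply: eq_bigr => l _; rewrite act_suml.
move=> e He; rewrite act_sumr => [|l]; last exact: rlin_comp (Hw e He l) (Ht l).
by apply: eq_bigr => l _; rewrite actM //; exact: Hw.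
Qed.
End RightAction.

Section TrivialSums.
Variables (R : nzRingType) (M : lmodType R^c).
Variables (B : zmodType) (act : B -> (M -> M) -> B).
Hypothesis act_right : right_S_action act.

(* A list s of pairs (b_k, x_k), read as \sum_k b_k (x) x_k, is trivial if,
   after reordering, x_k = \sum_l s_kl y_l for endomorphisms s_kl and
   elements y_l of M such that \sum_k b_k s_kl = 0 for every l.  An entry of
   the witness w is ((b_k, x_k), (s_kl)_l). *)
Definition trivial_sum (s : seq (B * M)) : Prop :=
  exists m (y : 'I_m -> M) (w : seq (B * M * ('I_m -> M -> M))),
  [/\ perm_eq (map fst w) s,
      forall e, e \in w -> (forall l, isEnd (e.2 l)) /\ e.1.2 = \sum_l e.2 l (y l) &
      forall l, \sum_(e <- w) act e.1.1 (e.2 l) = 0].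

Definition neg_terms (s : seq (B * M)) := [seq (p.1, - p.2) | p <- s].

Lemma neg_terms_cat s1 s2 : neg_terms (s1 ++ s2) = neg_terms s1 ++ neg_terms s2.
Proof. exact: map_cat. Qed.

Lemma neg_termsK s : neg_terms (neg_terms s) = s.
Proof. by elim: s => [|[b x] s IH] //=; rewrite opprK IH. Qed.

Lemma trivial_nil : trivial_sum [::].
Proof. by exists 0%N, (fun _ => 0), [::]; split => // l; rewrite big_nil. Qed.

Lemma trivial_perm s s' : perm_eq s s' -> trivial_sum s -> trivial_sum s'.
Proof. by move=> ss' [m [y [w [ws H S]]]]; exists m, y, w; split => //; exact: perm_trans ss'. Qed.

(* Two witnesses are merged by juxtaposing their families (y_l). *)
Lemma trivial_cat s1 s2 : trivial_sum s1 -> trivial_sum s2 -> trivial_sum (s1 ++ s2).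
Proof.
move=> [m1 [y1 [w1 [P1 H1 S1]]]] [m2 [y2 [w2 [P2 H2 S2]]]].
pose y l := match split l with inl l1 => y1 l1 | inr l2 => y2 l2 end.
pose ext1 (r : 'I_m1 -> M -> M) : 'I_(m1 + m2) -> M -> M := fun l =>
  match split l with inl l1 => r l1 | inr _ => fun _ => 0 end.
pose ext2 (r : 'I_m2 -> M -> M) : 'I_(m1 + m2) -> M -> M := fun l =>
  match split l with inl _ => fun _ => 0 | inr l2 => r l2 end.
have sl l1 : split (lshift m2 l1) = inl l1 := unsplitK (inl _ l1).
have sr l2 : split (rshift m1 l2) = inr l2 := unsplitK (inr _ l2).
exists (m1 + m2)%N, y,
  ([seq (e.1, ext1 e.2) | e <- w1] ++ [seq (e.1, ext2 e.2) | e <- w2]); split.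
- by rewrite map_cat -!map_comp; apply: perm_cat.
- move=> e; rewrite mem_cat => /orP[] /mapP [e' He' ->] /=.
    have [Hr Hx] := H1 e' He'; split.
      by move=> l; rewrite /ext1; case: (split l) => [l1|l2]; [exact: Hr | exact: rlin_zero].
    rewrite Hx big_split_ord /= [X in _ = _ + X]big1 ?addr0 => [|l2 _]; last by rewrite /ext1 sr.
    by apply: eq_bigr => l1 _; rewrite /ext1 /y sl.
  have [Hr Hx] := H2 e' He'; split.
    by move=> l; rewrite /ext2; case: (split l) => [l1|l2]; [exact: rlin_zero | exact: Hr].
  rewrite Hx big_split_ord /= [X in _ = X + _]big1 ?add0r => [|l1 _]; last by rewrite /ext2 sl.
  by apply: eq_bigr => l2 _; rewrite /ext2 /y sr.
- move=> l; rewrite big_cat !big_map /= /ext1 /ext2.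
  case: (split l) => [l1|l2].
    by rewrite S1 add0r big1 // => e _; rewrite (act0r act_right).
  by rewrite S2 addr0 big1 // => e _; rewrite (act0r act_right).
Qed.

Lemma trivial_neg s : trivial_sum s -> trivial_sum (neg_terms s).
Proof.
move=> [m [y [w [P H S]]]].
exists m, y,
  [seq (((e.1.1, - e.1.2), fun l v => - e.2 l v) : B * M * ('I_m -> M -> M)) | e <- w]; split.
- rewrite (_ : map fst _ = neg_terms (map fst w)); first exact: perm_map.
  by rewrite /neg_terms -!map_comp.
- move=> e /mapP [e' He' ->] /=; have [Hr Hx] := H e' He'.
  by split; [move=> l; exact: rlin_opp (Hr l) | rewrite Hx -sumrN].
- move=> l; rewrite -[RHS]oppr0 -[X in - X](S l) big_map -sumrN.
  by apply: eq_big_seq => e He; exact: (actNr act_right) ((H e He).1 l).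
Qed.

Let lone_witness (t : seq (B * M * (M -> M))) x :
  (forall e, e \in t -> isEnd e.2 /\ e.1.2 = e.2 x) ->
  \sum_(e <- t) act e.1.1 e.2 = 0 -> trivial_sum (map fst t).
Proof.
move=> Ht St; exists 1%N, (fun _ => x), [seq (e.1, fun _ : 'I_1 => e.2) | e <- t]; split.
- by rewrite -map_comp; exact: perm_refl.
- by move=> _ /mapP [e /Ht [Hr Hx] ->] /=; rewrite big_ord1.
- by move=> l; rewrite big_map.
Qed.

Let E1 : isEnd (@id M) := @rlin_id _ M.
Let EN1 : isEnd (fun v : M => - v) := rlin_opp E1.
Local Hint Resolve E1 EN1 : core.

Lemma trivial_pair b x : trivial_sum [:: (b, x); (b, - x)].
Proof.
apply: (lone_witness (t := [:: ((b, x), id); ((b, - x), fun v => - v)]) (x := x)).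
  by move=> e; rewrite !inE => /orP[] /eqP ->.
by rewrite !big_cons big_nil addr0 (actNr act_right) // subrr.
Qed.

Lemma trivial_cat_neg u : trivial_sum (u ++ neg_terms u).
Proof.
elim: u => [|[b x] u IH]; first exact: trivial_nil.
apply: (trivial_perm _ (trivial_cat (trivial_pair b x) IH)).
by apply/permP => p; rewrite /= !count_cat /=; lia.
Qed.

Lemma trivial_addl a b x : trivial_sum [:: (a + b, x); (a, - x); (b, - x)].
Proof.
apply: (lone_witness (x := x)
  (t := [:: ((a + b, x), id); ((a, - x), fun v => - v); ((b, - x), fun v => - v)])).
  by move=> e; rewrite !inE => /orP[/eqP -> | /orP[] /eqP ->].
by rewrite !big_cons big_nil /= addr0 !(actNr act_right) // !(act1 act_right) addrACA !subrr addr0.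
Qed.

Lemma trivial_addr a x y : trivial_sum [:: (a, x + y); (a, - x); (a, - y)].
Proof.
pose yv (l : 'I_2) := if val l == 0%N then x else y.
pose neg_at (i : nat) : 'I_2 -> M -> M :=
  fun l => if val l == i then fun v => - v else fun _ => 0.
exists 2%N, yv, [:: ((a, x + y), fun _ => id); ((a, - x), neg_at 0%N); ((a, - y), neg_at 1%N)].
split => //.
- move=> e; rewrite !inE => /orP[/eqP -> | /orP[] /eqP ->] /=;
    rewrite !big_ord_recl big_ord0 /= ?addr0 ?add0r ?oppr0; split => //;
    by move=> l; rewrite /neg_at; case: ifP => _; [exact: EN1 | exact: rlin_zero].
- move=> [[|[|l]] Hl] //; rewrite !big_cons big_nil /= /neg_at /= addr0 (act0r act_right).
    by rewrite addr0 (actNr act_right) // (act1 act_right) subrr.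
  by rewrite add0r (actNr act_right) // (act1 act_right) subrr.
Qed.

Lemma trivial_act a s x : isEnd s -> trivial_sum [:: (act a s, x); (a, - s x)].
Proof.
move=> Hs; apply: (lone_witness (x := x)
  (t := [:: ((act a s, x), id); ((a, - s x), fun v => - s v)])).
  by move=> e; rewrite !inE => /orP[] /eqP -> //; split => //; exact: rlin_opp.
by rewrite !big_cons big_nil /= addr0 (actNr act_right) // (act1 act_right) subrr.
Qed.
End TrivialSums.

Section Balanced.
Variables (R : nzRingType) (M : lmodType R^c).
Variables (A : zmodType) (act : A -> (M -> M) -> A) (G : zmodType) (beta : A -> M -> G).
Hypothesis beta_bal : S_balanced act beta.

Lemma bal0l x : beta 0 x = 0.
Proof. by case: beta_bal => H _; apply: (addIr (beta 0 x)); rewrite -H !add0r. Qed.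

Lemma bal0r a : beta a 0 = 0.
Proof. by case: beta_bal => _ [H _]; apply: (addIr (beta a 0)); rewrite -H !add0r. Qed.

Lemma bal_suml I (r : seq I) (F : I -> A) x :
  beta (\sum_(i <- r) F i) x = \sum_(i <- r) beta (F i) x.
Proof. by case: beta_bal => H _; apply: (big_morph (beta^~ x) (fun a b => H a b x) (bal0l x)). Qed.

Lemma bal_sumr I (r : seq I) (F : I -> M) a :
  beta a (\sum_(i <- r) F i) = \sum_(i <- r) beta a (F i).
Proof. by case: beta_bal => _ [H _]; apply: (big_morph (beta a) (H a) (bal0r a)). Qed.

Lemma bal_act a s x : isEnd s -> beta (act a s) x = beta a (s x).
Proof. by case: beta_bal => _ [_ H]; apply: H. Qed.
End Balanced.

Lemma trivial_tensor_zero (R : nzRingType) (M : lmodType R^c) (B : zmodType)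
    (act : B -> (M -> M) -> B) (G : zmodType) (beta : B -> M -> G) s :
  S_balanced act beta -> trivial_sum act s -> \sum_(p <- s) beta p.1 p.2 = 0.
Proof.
move=> Hbeta [m [y [w [P H S]]]]; rewrite -(perm_big _ P) big_map.
rewrite (eq_big_seq (fun e => \sum_l beta (act e.1.1 (e.2 l)) (y l))).
  by rewrite exchange_big big1 // => l _; rewrite -(bal_suml Hbeta) S (bal0l Hbeta).
move=> e /H [Hr ->]; rewrite (bal_sumr Hbeta).
by apply: eq_bigr => l _; rewrite (bal_act Hbeta).
Qed.

Lemma perm_map_cons (X Y : eqType) (f : X -> Y) (w : seq X) (p : Y) (A : seq Y) :
  perm_eq (map f w) (p :: A) ->
  exists2 e, f e = p & exists2 w', perm_eq w (e :: w') & perm_eq (map f w') A.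
Proof.
move=> wA; have /mapP [e ew pe] : p \in map f w by rewrite (perm_mem wA) mem_head.
exists e => //; exists (rem e w); first exact: perm_to_rem.
rewrite -(perm_cons p); apply: (perm_trans _ wA); rewrite perm_sym pe.
exact: (perm_map f (perm_to_rem ew)).
Qed.

(* Under (ii), trivial sums are closed under cancellation of a pair
   (b, x), (b, - x); this is what makes them a congruence. *)
Section Cancellation.
Variables (R : nzRingType) (M : lmodType R^c).
Local Notation Mn n := {ffun 'I_n -> M}.
Hypothesis ker_fg : kernels_fin_M_gen M.
Variables (B : zmodType) (act : B -> (M -> M) -> B).
Hypothesis act_right : right_S_action act.

Lemma cancelled_terms_vanish m (b : B) (r r' P : 'I_m -> M -> M) :
  (forall l, isEnd (r l)) -> (forall l, isEnd (r' l)) -> (forall l, isEnd (P l)) ->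
  (forall v, \sum_l (r l (P l v) + r' l (P l v)) = 0) ->
  \sum_l act (- (act b (r l) + act b (r' l))) (P l) = 0.
Proof.
move=> Hr Hr' HP qP0.
have HrP l : isEnd (fun v => r l (P l v)) := rlin_comp (Hr l) (HP l).
have Hr'P l : isEnd (fun v => r' l (P l v)) := rlin_comp (Hr' l) (HP l).
have Eact l : act (- (act b (r l) + act b (r' l))) (P l) =
    - act b (fun v => r l (P l v) + r' l (P l v)).
  by rewrite (actNl act_right) // (actDl act_right) // -!(actM act_right) // (actDr act_right).
under eq_bigr do rewrite Eact.
rewrite sumrN -(act_sumr act_right) => [|l]; last exact: rlin_add (HrP l) (Hr'P l).
suff -> : (fun v => \sum_l (r l (P l v) + r' l (P l v))) = (fun _ => 0).
  by rewrite (act0r act_right) oppr0.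
exact: funext qP0.
Qed.

(* The element y lies in
   the kernel of q : z |-> \sum_l (r_l + r'_l) z_l; writing y = psi Y for a
   generating map psi of ker q, the terms of w become a witness over Y,
   because the contribution of the two removed terms is killed by q psi = 0. *)
Lemma trivial_of_cancelled_witness m (y : 'I_m -> M) (b : B) (r r' : 'I_m -> M -> M)
    (w : seq (B * M * ('I_m -> M -> M))) :
  (forall l, isEnd (r l)) -> (forall l, isEnd (r' l)) ->
  \sum_l (r l (y l) + r' l (y l)) = 0 ->
  (forall e, e \in w -> (forall l, isEnd (e.2 l)) /\ e.1.2 = \sum_l e.2 l (y l)) ->
  (forall l, act b (r l) + act b (r' l) + \sum_(e <- w) act e.1.1 (e.2 l) = 0) ->
  trivial_sum act (map fst w).
Proof.
move=> Hr Hr' ry0 Hw Hsum.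
case: (posnP m) => [m0 | m_gt0].
  by exists m, y, w; split => // -[l Hl]; exfalso; rewrite m0 in Hl.
pose q (z : Mn m) := \sum_l (r l (z l) + r' l (z l)).
have Hq : rlinear q.
  apply: rlin_sumf => l; apply: rlin_add.
  - exact: rlin_comp (Hr l) (rlin_coord l).
  - exact: rlin_comp (Hr' l) (rlin_coord l).
have [m1 [_ [psi [Hpsi ker_q]]]] := ker_fg m_gt0 Hq.
have [Y psiY] : exists Y, psi Y = [ffun l => y l].
  by apply/ker_q; rewrite /q; under eq_bigr do rewrite ffunE.
pose P l l' v := psi (inj_at l' v) l.
have HP l l' : isEnd (P l l').
  exact: (rlin_app (phi := fun v => psi (inj_at l' v))) (rlin_comp Hpsi (rlin_inj_at l')).
have y_Y l : y l = \sum_l' P l l' (Y l').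
  by rewrite -[y l](ffunE (fun l => y l)) -psiY (rlin_decompose_coord _ _ Hpsi).
exists m1, (fun l' => Y l'),
  [seq ((e.1, fun l' v => \sum_l e.2 l (P l l' v)) : B * M * ('I_m1 -> M -> M)) | e <- w]; split.
- by rewrite -map_comp; exact: perm_refl.
- move=> _ /mapP [e /Hw [He Hx] ->] /=; rewrite Hx; split.
    by move=> l'; apply: rlin_sumf => l; exact: rlin_comp (He l) (HP l l').
  rewrite exchange_big; apply: eq_bigr => l _.
  by rewrite y_Y (rlin_sum (He l)).
- move=> l'; rewrite big_map (act_sum_rows act_right) => [|e /Hw[] //|l]; last exact: HP.
  have Ew l : \sum_(e <- w) act e.1.1 (e.2 l) = - (act b (r l) + act b (r' l)).
    by apply/eqP; rewrite -addr_eq0 addrC Hsum.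
  under eq_bigr do rewrite Ew.
  apply: cancelled_terms_vanish => // v.
  by apply/(ker_q (psi (inj_at l' v))).2; exists (inj_at l' v).
Qed.

Lemma trivial_cancel_pair A b x :
  trivial_sum act (A ++ [:: (b, x); (b, - x)]) -> trivial_sum act A.
Proof.
move=> [m [y [w [wP wH wS]]]].
have wP' : perm_eq (map fst w) ((b, x) :: (b, - x) :: A).
  by apply: (perm_trans wP); rewrite perm_catC; exact: perm_refl.
have [e1 e1P [w1 ww1 w1P]] := perm_map_cons wP'.
have [e2 e2P [w2 w1w2 w2P]] := perm_map_cons w1P.
have ww : perm_eq w [:: e1, e2 & w2] by apply: (perm_trans ww1); rewrite perm_cons.
have e1w : e1 \in w by rewrite (perm_mem ww) mem_head.
have e2w : e2 \in w by rewrite (perm_mem ww) !inE eqxx orbT.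
apply: (trivial_perm w2P).
apply: (trivial_of_cancelled_witness (y := y) (b := b) (r := e1.2) (r' := e2.2)).
- exact: (wH e1 e1w).1.
- exact: (wH e2 e2w).1.
- by rewrite big_split /= -(wH e1 e1w).2 -(wH e2 e2w).2 e1P e2P subrr.
- by move=> e e_w2; apply: wH; rewrite (perm_mem ww) !inE e_w2 !orbT.
- by move=> l; rewrite -addrA; have := wS l; rewrite (perm_big _ ww) !big_cons e1P e2P; apply.
Qed.

Lemma trivial_cancel A u : trivial_sum act (A ++ u ++ neg_terms u) -> trivial_sum act A.
Proof.
elim: u A => [|[b x] u IH] A; first by rewrite cats0.
move=> H; apply: IH; apply: (trivial_cancel_pair (b := b) (x := x)).
apply: (trivial_perm _ H); apply/permP => p.
by rewrite /= /neg_terms /= !count_cat /= !count_cat /=; lia.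
Qed.
End Cancellation.

(* Under (ii), B (x)_S M is the quotient of the lists of pairs (b, x) by the
   congruence "the difference is a trivial sum"; a sum that vanishes in it,
   hence one that vanishes under every balanced map, is trivial. *)
Section TensorProduct.
Variables (R : nzRingType) (M : lmodType R^c).
Hypothesis ker_fg : kernels_fin_M_gen M.
Variables (B : zmodType) (act : B -> (M -> M) -> B).
Hypothesis act_right : right_S_action act.
Local Notation terms := (seq (B * M)).

Definition tensor_eqv (u v : terms) := trivial_sum act (u ++ neg_terms v).

Lemma tensor_eqv_refl u : tensor_eqv u u.
Proof. exact: (trivial_cat_neg act_right). Qed.

Lemma tensor_eqv_sym u v : tensor_eqv u v -> tensor_eqv v u.
Proof.
move=> /(trivial_neg act_right); rewrite neg_terms_cat neg_termsK.
by apply: trivial_perm; rewrite perm_catC.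
Qed.

Lemma tensor_eqv_trans u v w : tensor_eqv u v -> tensor_eqv v w -> tensor_eqv u w.
Proof.
move=> uv vw; apply: (trivial_cancel ker_fg act_right (u := v)).
apply: (trivial_perm _ (trivial_cat act_right uv vw)).
by apply/permP => p; rewrite !count_cat; lia.
Qed.

Lemma tensor_eqv_cat x x' y y' :
  tensor_eqv x x' -> tensor_eqv y y' -> tensor_eqv (x ++ y) (x' ++ y').
Proof.
move=> xx' yy'; apply: (trivial_perm _ (trivial_cat act_right xx' yy')).
by apply/permP => p; rewrite !neg_terms_cat !count_cat; lia.
Qed.

Lemma tensor_eqv_neg x x' : tensor_eqv x x' -> tensor_eqv (neg_terms x) (neg_terms x').
Proof. by move=> /(trivial_neg act_right); rewrite /tensor_eqv neg_terms_cat. Qed.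

Lemma tensor_eqv_perm x y : perm_eq x y -> tensor_eqv x y.
Proof.
move=> xy; apply: (trivial_perm _ (tensor_eqv_refl x)).
by rewrite perm_cat2l /neg_terms perm_map.
Qed.

Lemma tensor_eqv_catA x y z : tensor_eqv (x ++ (y ++ z)) ((x ++ y) ++ z).
Proof. by rewrite catA; exact: tensor_eqv_refl. Qed.

Lemma tensor_eqv_catC x y : tensor_eqv (x ++ y) (y ++ x).
Proof. by apply: tensor_eqv_perm; rewrite perm_catC. Qed.

Lemma tensor_eqv_nil x : tensor_eqv ([::] ++ x) x.
Proof. exact: tensor_eqv_refl. Qed.

Lemma tensor_eqv_negK x : tensor_eqv (neg_terms x ++ x) [::].
Proof. by apply: (trivial_perm _ (tensor_eqv_refl x)); rewrite cats0 perm_catC. Qed.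

Definition tensor : zmodType :=
  eqv_quotient tensor_eqv_refl tensor_eqv_sym tensor_eqv_trans tensor_eqv_cat tensor_eqv_neg
    tensor_eqv_catA tensor_eqv_catC tensor_eqv_nil tensor_eqv_negK.

Definition tensor_of (s : terms) : tensor :=
  to_eqv_quotient tensor_eqv_refl tensor_eqv_sym tensor_eqv_trans tensor_eqv_cat tensor_eqv_neg
    tensor_eqv_catA tensor_eqv_catC tensor_eqv_nil tensor_eqv_negK s.

Definition tmul (b : B) (x : M) : tensor := tensor_of [:: (b, x)].

Lemma tensor_of_cat s t : tensor_of (s ++ t) = tensor_of s + tensor_of t.
Proof. exact: to_eqv_quotientD. Qed.

Lemma tensor_of_sum I (r : seq I) (F : I -> B * M) :
  \sum_(i <- r) tmul (F i).1 (F i).2 = tensor_of (map F r).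
Proof.
elim: r => [|i r IH]; first by rewrite big_nil; exact: to_eqv_quotient0.
by rewrite big_cons IH /tmul -tensor_of_cat -surjective_pairing.
Qed.

Lemma tmul_balanced : S_balanced act tmul.
Proof.
split; [|split] => [a b x | a x y | a s x Hs]; rewrite /tmul -?tensor_of_cat;
  apply: to_eqv_quotient_eq.
- exact: (trivial_addl act_right).
- exact: (trivial_addr act_right).
- exact: (trivial_act act_right).
Qed.

Lemma trivial_of_tensor_zero n (b : 'I_n -> B) (x : 'I_n -> M) :
  tensor_zero act b x -> trivial_sum act [seq (b k, x k) | k <- index_enum 'I_n].
Proof.
move=> /(_ tensor tmul tmul_balanced).
rewrite (tensor_of_sum _ (fun k => (b k, x k))) => /(to_eqv_quotient_inj (u := [::])).
by rewrite /tensor_eqv cats0.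
Qed.
End TensorProduct.

(* Trivial sums pull back along an injective S-linear map f : A -> B: the
   coefficients b_k of a witness all lie in the image of f. *)
Section Pullback.
Variables (R : nzRingType) (M : lmodType R^c).
Variables (A : zmodType) (actA : A -> (M -> M) -> A).
Variables (B : zmodType) (actB : B -> (M -> M) -> B) (f : A -> B).
Hypotheses (fD : forall a b, f (a + b) = f a + f b)
  (f_act : forall a s, isEnd s -> f (actA a s) = actB (f a) s) (f_inj : injective f).

Lemma trivial_pullback (s : seq (A * M)) :
  trivial_sum actB [seq (f p.1, p.2) | p <- s] -> trivial_sum actA s.
Proof.
move=> [m [y [w [P H S]]]].
have [g fK] : exists g : B -> A, cancel f g.
  have /choice [g Hg] : forall b : B, exists a : A, forall a', f a' = b -> a' = a.
    move=> b; case: (pselect (exists a', f a' = b)) => [[a' <-] | no_a].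
      by exists a' => a'' /f_inj.
    by exists 0 => a' fa'; case: no_a; exists a'.
  by exists g => a; symmetry; exact: Hg.
have f0 : f 0 = 0 by apply: (addIr (f 0)); rewrite -fD !add0r.
have in_im e : e \in w -> f (g e.1.1) = e.1.1.
  move=> ew; have : e.1 \in [seq (f p.1, p.2) | p <- s] by rewrite -(perm_mem P) map_f.
  by case/mapP => -[a x] _ -> /=; rewrite fK.
exists m, y, [seq ((g e.1.1, e.1.2), e.2) | e <- w]; split.
- rewrite (_ : map fst _ = [seq (g p.1, p.2) | p <- map fst w]); last by rewrite -!map_comp.
  have -> : s = [seq (g p.1, p.2) | p <- [seq (f p.1, p.2) | p <- s]].
    by rewrite -map_comp -[LHS]map_id; apply: eq_map => -[a x] /=; rewrite fK.
  exact: perm_map.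
- by move=> _ /mapP [e /H He ->].
- move=> l; apply: f_inj; rewrite f0 (big_morph f fD f0) big_map -[RHS](S l).
  by apply: eq_big_seq => e ew /=; rewrite f_act ?in_im //; exact: (H e ew).1.
Qed.
End Pullback.

(* (ii) ==> M is flat: a sum that vanishes in B (x)_S M is trivial, hence
   pulls back to a trivial sum in A, which vanishes in A (x)_S M. *)
Lemma flat_of_kernels (R : nzRingType) (M : lmodType R^c) :
  kernels_fin_M_gen M -> flat_left_S M.
Proof.
move=> ker_fg A actA B actB f HA HB fD f_act f_inj n a x tzB G beta Hbeta.
have := trivial_of_tensor_zero ker_fg HB tzB.
rewrite (_ : [seq _ | k <- _] = [seq (f p.1, p.2) | p <- [seq (a k, x k) | k <- index_enum 'I_n]]).
  by move=> /(trivial_pullback fD f_act f_inj) /(trivial_tensor_zero Hbeta); rewrite big_map.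
by rewrite -map_comp.
Qed.

Section EndSubgroup.
Variables (R : nzRingType) (M : lmodType R^c) (P : (M -> M) -> Prop).
Hypotheses (P0 : P (fun _ => 0)) (PD : forall s t, P s -> P t -> P (fun x => s x + t x))
  (PN : forall s, P s -> P (fun x => - s x)).

Definition end_sub := {s : M -> M | P s}.

Lemma end_sub_ext (u v : end_sub) : (forall x, sval u x = sval v x) -> u = v.
Proof.
case: u v => [u Pu] [v Pv] /= E; have Euv := funext E; subst v.
by congr exist; apply: Prop_irrelevance.
Qed.

Definition end_sub0 : end_sub := exist _ _ P0.
Definition end_subD (u v : end_sub) : end_sub := exist _ _ (PD (proj2_sig u) (proj2_sig v)).
Definition end_subN (u : end_sub) : end_sub := exist _ _ (PN (proj2_sig u)).

Lemma end_subA : associative end_subD.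
Proof. by move=> u v w; apply: end_sub_ext => x /=; rewrite addrA. Qed.

Lemma end_subC : commutative end_subD.
Proof. by move=> u v; apply: end_sub_ext => x /=; rewrite addrC. Qed.

Lemma end_sub0D : left_id end_sub0 end_subD.
Proof. by move=> u; apply: end_sub_ext => x /=; rewrite add0r. Qed.

Lemma end_subND : left_inverse end_sub0 end_subN end_subD.
Proof. by move=> u; apply: end_sub_ext => x /=; rewrite addNr. Qed.

HB.instance Definition _ := gen_eqMixin end_sub.
HB.instance Definition _ := gen_choiceMixin end_sub.
HB.instance Definition _ :=
  GRing.isZmodule.Build end_sub end_subA end_subC end_sub0D end_subND.

Definition end_subgroup : zmodType := end_sub.
Definition esval (u : end_subgroup) : M -> M := sval u.

Lemma esvalD (u v : end_subgroup) x : esval (u + v) x = esval u x + esval v x.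
Proof. by []. Qed.

Lemma esvalP (u : end_subgroup) : P (esval u).
Proof. exact: proj2_sig. Qed.

Lemma end_subgroup_ext (u v : end_subgroup) : (forall x, esval u x = esval v x) -> u = v.
Proof. exact: end_sub_ext. Qed.

Hypotheses (PE : forall s, P s -> isEnd s)
  (PM : forall s t, P s -> isEnd t -> P (fun x => s (t x))).

(* right multiplication by s, for s in S (the value is irrelevant otherwise) *)
Definition end_act (a : end_subgroup) (s : M -> M) : end_subgroup :=
  if pselect (isEnd s) is left Hs then (exist _ _ (PM (esvalP a) Hs) : end_sub) else a.

Lemma end_actE a s : isEnd s -> forall x, esval (end_act a s) x = esval a (s x).
Proof. by move=> Hs x; rewrite /end_act; case: pselect. Qed.

Lemma end_act_right : right_S_action end_act.
Proof.
split; [|split; [|split]].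
- by move=> a b s Hs; apply: end_subgroup_ext => x; rewrite esvalD !end_actE // esvalD.
- move=> a s t Hs Ht; apply: end_subgroup_ext => x.
  by rewrite esvalD !end_actE //; [exact: (rlinD (PE (esvalP a))) | exact: rlin_add Hs Ht].
- move=> a s t Hs Ht; apply: end_subgroup_ext => x.
  by rewrite !end_actE //; exact: rlin_comp Hs Ht.
- by move=> a; apply: end_subgroup_ext => x; rewrite end_actE //; exact: rlin_id.
Qed.
End EndSubgroup.

Definition unit_row (R : nzRingType) (M : lmodType R^c) p (j i : 'I_p) : M -> M :=
  if i == j then id else fun _ => 0.

Lemma unit_row_end (R : nzRingType) (M : lmodType R^c) p (j i : 'I_p) :
  isEnd (@unit_row R M p j i).
Proof. by rewrite /unit_row; case: eqP => _; [exact: rlin_id | exact: rlin_zero]. Qed.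

Lemma sum_unit_row (R : nzRingType) (M : lmodType R^c) p (F : 'I_p -> M -> M) j x :
  (forall i, isEnd (F i)) -> \sum_i F i (unit_row j i x) = F j x.
Proof.
move=> HF; rewrite (bigD1 j) //= /unit_row eqxx big1 ?addr0 // => i /negPf ->.
exact: (rlin0 (HF i)).
Qed.

Lemma right_ideal_gen_self (R : nzRingType) (M : lmodType R^c) p (h : 'I_p -> M -> M) j :
  (forall i, isEnd (h i)) -> right_ideal_gen h (h j).
Proof.
move=> Hh; exists (unit_row j); split; first exact: unit_row_end.
by move=> x; rewrite sum_unit_row.
Qed.

(* (i) ==> (ii), for a fixed map M^(n) -> M given by a row (g_j) of
   endomorphisms, together with a finite presentation of the right ideal I
   they generate: generators g'_i with g' = g d and g = g' c, and relations
   v_l (rows of v) that generate all relations among the g'_i. *)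
Section KernelFromPresentation.
Variables (R : nzRingType) (M : lmodType R^c).
Local Notation Mn n := {ffun 'I_n -> M}.
Variables (n k m : nat) (g : 'I_n -> M -> M) (g' : 'I_k -> M -> M).
Variables (d : 'I_k -> 'I_n -> M -> M) (c : 'I_n -> 'I_k -> M -> M).
Variable v : 'I_m -> 'I_k -> M -> M.
Hypotheses (Hg : forall j, isEnd (g j)) (Hg' : forall i, isEnd (g' i))
  (Hd : forall i j, isEnd (d i j)) (Hc : forall j i, isEnd (c j i))
  (Hv : forall l i, isEnd (v l i)).
Hypotheses (g'_d : forall i x, g' i x = \sum_j g j (d i j x))
  (g_c : forall j x, g j x = \sum_i g' i (c j i x))
  (v_rel : forall l x, \sum_i g' i (v l i x) = 0)
  (rel_v : forall t : 'I_k -> M -> M, (forall i, isEnd (t i)) ->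
     (forall x, \sum_i g' i (t i x) = 0) ->
     forall x, exists w : Mn m, [ffun i => t i x] = mx_map v w).

Lemma comb_g_d u : comb g (mx_map d u) = comb g' u.
Proof. by rewrite comb_mx_map //; apply: eq_bigr => i _; rewrite g'_d. Qed.

Lemma comb_g'_c z : comb g' (mx_map c z) = comb g z.
Proof. by rewrite comb_mx_map //; apply: eq_bigr => j _; rewrite g_c. Qed.

Lemma comb_g'_v w : comb g' (mx_map v w) = 0.
Proof. by rewrite comb_mx_map // big1 // => l _; exact: v_rel. Qed.

(* (z, w) |-> z - d c z + d v w maps M^(n+m) onto ker (comb g) *)
Definition kernel_map (Z : Mn (n + m)) : Mn n :=
  [ffun j => Z (lshift m j)] - mx_map d (mx_map c [ffun j => Z (lshift m j)])
  + mx_map d (mx_map v [ffun l => Z (rshift n l)]).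

Lemma rlin_kernel_map : rlinear kernel_map.
Proof.
have Hl : rlinear (fun Z : Mn (n + m) => [ffun j => Z (lshift m j)]).
  by apply: rlin_ffun => j; exact: rlin_coord.
have Hr : rlinear (fun Z : Mn (n + m) => [ffun l => Z (rshift n l)]).
  by apply: rlin_ffun => l; exact: rlin_coord.
have Hmx p q (F : 'I_p -> 'I_q -> M -> M) : (forall i j, isEnd (F i j)) -> rlinear (mx_map F).
  exact: rlin_mx_map.
apply: rlin_add; first apply: rlin_sub => //.
  exact: rlin_comp (Hmx _ _ _ Hd) (rlin_comp (Hmx _ _ _ Hc) Hl).
exact: rlin_comp (Hmx _ _ _ Hd) (rlin_comp (Hmx _ _ _ Hv) Hr).
Qed.

Lemma kernel_map_ker Z : comb g (kernel_map Z) = 0.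
Proof.
have Hcomb := rlin_comb Hg.
by rewrite (rlinD Hcomb) (rlinB Hcomb) !comb_g_d comb_g'_c comb_g'_v subrr addr0.
Qed.

Definition in_ideal (s : M -> M) := isEnd s /\ right_ideal_gen g s.

Lemma in_ideal0 : in_ideal (fun _ => 0).
Proof.
split; first exact: rlin_zero.
exists (fun _ _ => 0); split; first by move=> j; exact: rlin_zero.
by move=> x; rewrite big1 // => j _; exact: (rlin0 (Hg j)).
Qed.

Lemma in_idealD s t : in_ideal s -> in_ideal t -> in_ideal (fun x => s x + t x).
Proof.
move=> [Hs [u [Hu su]]] [Ht [u' [Hu' tu']]]; split; first exact: rlin_add Hs Ht.
exists (fun j x => u j x + u' j x); split; first by move=> j; exact: rlin_add (Hu j) (Hu' j).
by move=> x; rewrite su tu' -big_split; apply: eq_bigr => j _; rewrite (rlinD (Hg j)).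
Qed.

Lemma in_idealN s : in_ideal s -> in_ideal (fun x => - s x).
Proof.
move=> [Hs [u [Hu su]]]; split; first exact: rlin_opp Hs.
exists (fun j x => - u j x); split; first by move=> j; exact: rlin_opp (Hu j).
by move=> x; rewrite su -sumrN; apply: eq_bigr => j _; rewrite (rlinN (Hg j)).
Qed.

Lemma in_idealE s : in_ideal s -> isEnd s.
Proof. by case. Qed.

Lemma in_idealM s t : in_ideal s -> isEnd t -> in_ideal (fun x => s (t x)).
Proof.
move=> [Hs [u [Hu su]]] Ht; split; first exact: rlin_comp Hs Ht.
by exists (fun j x => u j (t x)); split => // j; exact: rlin_comp (Hu j) Ht.
Qed.

Lemma in_ideal_gen j : in_ideal (g j).
Proof. by split; [exact: Hg | exact: right_ideal_gen_self]. Qed.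

Lemma ideal_coeffs s : in_ideal s ->
  exists t : 'I_k -> M -> M, (forall i, isEnd (t i)) /\ forall x, s x = \sum_i g' i (t i x).
Proof.
case=> _ [u [Hu su]]; exists (fun i x => \sum_j c j i (u j x)); split.
  by move=> i; apply: rlin_sumf => j; exact: rlin_comp (Hc j i) (Hu j).
move=> x; rewrite su (eq_bigr _ (fun j _ => g_c j (u j x))) exchange_big /=.
by apply: eq_bigr => i _; rewrite (rlin_sum (Hg' i)).
Qed.

Definition relation_vec (u : Mn k) := exists w, u = mx_map v w.

Lemma relation_vec0 : relation_vec 0.
Proof. by exists 0; rewrite (rlin0 (rlin_mx_map Hv)). Qed.

Lemma relation_vecB u u' : relation_vec u -> relation_vec u' -> relation_vec (u - u').
Proof. by move=> [w ->] [w' ->]; exists (w - w'); rewrite (rlinB (rlin_mx_map Hv)). Qed.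

Lemma relation_vecD u u' : relation_vec u -> relation_vec u' -> relation_vec (u + u').
Proof. by move=> [w ->] [w' ->]; exists (w + w'); rewrite (rlinD (rlin_mx_map Hv)). Qed.

Lemma expansions_differ (t t' : 'I_k -> M -> M) :
  (forall i, isEnd (t i)) -> (forall i, isEnd (t' i)) ->
  (forall x, \sum_i g' i (t i x) = \sum_i g' i (t' i x)) ->
  forall x, relation_vec ([ffun i => t i x] - [ffun i => t' i x]).
Proof.
move=> Ht Ht' tt' x.
have Htt' i : isEnd (fun y => t i y - t' i y) by exact: rlin_sub (Ht i) (Ht' i).
have rel y : \sum_i g' i (t i y - t' i y) = 0.
  by under eq_bigr do rewrite (rlinB (Hg' _)); rewrite sumrB tt' subrr.
have [w Ew] := rel_v Htt' rel x.
by exists w; rewrite -Ew; apply/ffunP => i; rewrite !ffunE.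
Qed.

Definition endS : zmodType :=
  end_subgroup (@rlin_zero _ M M) (@rlin_add _ M M) (@rlin_opp _ M M).
Definition endS_act : endS -> (M -> M) -> endS := end_act (@rlin_comp _ M M M).
Definition idealI : zmodType := end_subgroup in_ideal0 in_idealD in_idealN.
Definition idealI_act : idealI -> (M -> M) -> idealI := end_act in_idealM.
Definition incl (a : idealI) : endS := exist _ (esval a) (in_idealE (esvalP a)).
Definition gen_in_I (j : 'I_n) : idealI := exist _ (g j) (in_ideal_gen j).

Lemma endS_act_right : right_S_action endS_act.
Proof. by apply: end_act_right. Qed.

Lemma idealI_act_right : right_S_action idealI_act.
Proof. by apply: end_act_right; exact: in_idealE. Qed.

Lemma inclD a b : incl (a + b) = incl a + incl b.
Proof. by apply: end_subgroup_ext. Qed.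

Lemma incl_act a s : isEnd s -> incl (idealI_act a s) = endS_act (incl a) s.
Proof.
move=> Hs; apply: end_subgroup_ext => x.
by transitivity (esval a (s x)); [exact: end_actE | rewrite end_actE].
Qed.

Lemma incl_inj : injective incl.
Proof.
move=> a b Eab; apply: end_subgroup_ext => x.
exact: (congr1 (fun u : endS => esval u x) Eab).
Qed.

Definition ideal_coef : idealI -> 'I_k -> M -> M :=
  projT1 (choice (fun a : idealI => ideal_coeffs (esvalP a))).

Lemma ideal_coefP a : (forall i, isEnd (ideal_coef a i)) /\
  forall x, esval a x = \sum_i g' i (ideal_coef a i x).
Proof. by rewrite /ideal_coef; case: choice => coef; apply. Qed.

(* The balanced map I x M -> M^(k) / relations, (a, x) |-> [coefficients of a]
   evaluated at x; it is well defined because of [expansions_differ]. *)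
Definition coef_class (a : idealI) (x : M) : subgroup_quot relation_vec0 relation_vecB :=
  to_quot relation_vec0 relation_vecB [ffun i => ideal_coef a i x].

Lemma coef_class_balanced : S_balanced idealI_act coef_class.
Proof.
have Hcoef a := (ideal_coefP a).1.
split; [|split] => [a b x | a x y | a s x Hs]; rewrite /coef_class.
- rewrite -to_quotD; apply: to_quot_eq.
  have -> : [ffun i => ideal_coef a i x] + [ffun i => ideal_coef b i x] =
            [ffun i => ideal_coef a i x + ideal_coef b i x] by apply/ffunP => i; rewrite !ffunE.
  apply: (expansions_differ (t := ideal_coef (a + b))
    (t' := fun i x => ideal_coef a i x + ideal_coef b i x)) => [i | i | y].
    exact: Hcoef.
    exact: rlin_add (Hcoef a i) (Hcoef b i).
  rewrite -(ideal_coefP (a + b)).2 esvalD (ideal_coefP a).2 (ideal_coefP b).2 -big_split.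
  by apply: eq_bigr => i _; rewrite (rlinD (Hg' i)).
- rewrite -to_quotD; congr to_quot; apply/ffunP => i.
  by rewrite !ffunE (rlinD (Hcoef a i)).
- apply: to_quot_eq.
  apply: (expansions_differ (t := ideal_coef (idealI_act a s))
    (t' := fun i x => ideal_coef a i (s x))) => [i | i | y].
  + exact: Hcoef.
  + exact: rlin_comp (Hcoef a i) Hs.
  + by rewrite -(ideal_coefP _).2 end_actE // (ideal_coefP a).2.
Qed.

Lemma gen_tensor_zero y : comb g y = 0 -> tensor_zero endS_act (fun j => incl (gen_in_I j)) y.
Proof.
move=> gy0 G beta Hbeta.
pose one : endS := exist _ id (@rlin_id _ M).
have gen_one j : incl (gen_in_I j) = endS_act one (g j).
  by apply: end_subgroup_ext => x; rewrite end_actE.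
rewrite (eq_bigr (fun j => beta one (g j (y j)))) => [|j _]; last first.
  by rewrite /= gen_one (bal_act Hbeta _ _ (Hg j)).
by rewrite -(bal_sumr Hbeta) -/(comb g y) gy0 (bal0r Hbeta).
Qed.

(* Flatness: the sum then vanishes in I (x)_S M; testing it against
   [coef_class] shows that the coefficients c y of \sum_j g_j y_j with respect
   to the g'_i form a relation. *)
Lemma coeffs_of_kernel : flat_left_S M ->
  forall y, comb g y = 0 -> relation_vec (mx_map c y).
Proof.
move=> M_flat y gy0.
have := M_flat _ _ _ _ incl idealI_act_right endS_act_right inclD incl_act incl_inj
  n gen_in_I y (gen_tensor_zero gy0) _ coef_class coef_class_balanced.
rewrite /coef_class -to_quot_sum => sum0.
have rel_sum : relation_vec (\sum_j [ffun i => ideal_coef (gen_in_I j) i (y j)]).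
  exact: to_quot_eq0 sum0.
have -> : mx_map c y = (mx_map c y - \sum_j [ffun i => ideal_coef (gen_in_I j) i (y j)])
    + \sum_j [ffun i => ideal_coef (gen_in_I j) i (y j)] by rewrite subrK.
apply: relation_vecD rel_sum.
have -> : mx_map c y = \sum_j [ffun i => c j i (y j)].
  by apply/ffunP => i; rewrite ffunE sum_ffunE; apply: eq_bigr => j _; rewrite ffunE.
rewrite -sumrB; apply: (big_ind relation_vec relation_vec0 relation_vecD) => j _.
apply: (expansions_differ (t := c j) (t' := ideal_coef (gen_in_I j))) => [i | i | x].
- exact: Hc.
- exact: (ideal_coefP _).1.
- by rewrite -g_c -(ideal_coefP (gen_in_I j)).2.
Qed.

Lemma kernel_map_onto : flat_left_S M ->
  forall y, comb g y = 0 -> exists Z, kernel_map Z = y.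
Proof.
move=> M_flat y /(coeffs_of_kernel M_flat) [w cyw].
pose Z : Mn (n + m) := [ffun p => match split p with inl j => y j | inr l => w l end].
have Zl : [ffun j => Z (lshift m j)] = y.
  by apply/ffunP => j; rewrite !ffunE (unsplitK (inl _ j)).
have Zr : [ffun l => Z (rshift n l)] = w.
  by apply/ffunP => l; rewrite !ffunE (unsplitK (inr _ l)).
by exists Z; rewrite /kernel_map Zl Zr cyw subrK.
Qed.
End KernelFromPresentation.

(* (i) ==> (ii): choose the data of [KernelFromPresentation] for
   rho = \sum_j g_j, g_j = rho on the j-th summand. *)
Lemma kernels_of_flat (R : nzRingType) (M : lmodType R^c) :
  S_right_coherent M -> flat_left_S M -> kernels_fin_M_gen M.
Proof.
move=> S_coh M_flat n rho n_gt0 Hrho.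
pose g j x := rho (inj_at j x).
have Hg j : isEnd (g j) := rlin_comp Hrho (rlin_inj_at j).
have [k [g' [Hg' [same_ideal [m [v [Hv pres]]]]]]] := S_coh n g Hg.
have [d Hd] := choice (fun i => (same_ideal (g' i)).2 (right_ideal_gen_self i Hg')).
have [c Hc] := choice (fun j => (same_ideal (g j)).1 (right_ideal_gen_self j Hg)).
have v_rel l x : \sum_i g' i (v l i x) = 0.
  apply: (pres (v l) (Hv l)).2; exists (unit_row l); split; first exact: unit_row_end.
  by move=> i y; rewrite (sum_unit_row (F := fun l' => v l' i)) // => l'; exact: Hv.
have rel_v t : (forall i, isEnd (t i)) -> (forall x, \sum_i g' i (t i x) = 0) ->
    forall x, exists w : {ffun 'I_m -> M}, [ffun i => t i x] = mx_map v w.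
  move=> Ht /(pres t Ht).1 [u [Hu tu]] x; exists [ffun l => u l x].
  by apply/ffunP => i; rewrite !ffunE tu; apply: eq_bigr => l _; rewrite ffunE.
have Hd' i := (Hd i).1; have g'_d i := (Hd i).2.
have Hc' j := (Hc j).1; have g_c j := (Hc j).2.
exists (n + m)%N; split; first by rewrite addn_gt0 n_gt0.
exists (kernel_map d c v); split; first exact: rlin_kernel_map.
move=> y; rewrite (rlin_decompose y Hrho) -/(comb g y); split.
  by apply: (kernel_map_onto (g' := g')).
by move=> [Z <-]; apply: (kernel_map_ker (g' := g')).
Qed.

Theorem mainTheorem14 (R : nzRingType) (M : lmodType R^c) :
  ((S_right_coherent M /\ flat_left_S M) -> @M_coherent R M M (fun _ : M => True)) /\
  (intrinsically_projective M ->
     ((S_right_coherent M /\ flat_left_S M) <-> @M_coherent R M M (fun _ : M => True))).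
Proof.
have i_ii : S_right_coherent M /\ flat_left_S M -> M_coherent M (fun _ : M => True).
  by case=> S_coh M_flat; apply/M_coherentP; exact: kernels_of_flat.
split=> // M_ip; split=> // /M_coherentP ker_fg.
split; [exact: S_right_coherent_of_kernels | exact: flat_of_kernels].
Qed.
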